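(* For every $n\ge 3$ and every $0\le h\le n-2$, $\kappa_s^{(h)}(S_{n,2})=n-1$.
   Context: For integers $1\le k\le n-1$, let $I_n=\{1,\dots,n\}$ and $P(n,k)$ the set of $k$-permutations $p_1p_2\cdots p_k$ of distinct elements of $I_n$. The $(n,k)$-star graph $S_{n,k}$ has vertex set $P(n,k)$; a vertex $p=p_1p_2\cdots p_k$ is adjacent to (a) each vertex obtained by swapping $p_1$ with $p_i$ for $2\le i\le k$, and (b) each vertex $\alpha p_2\cdots p_k$ with $\alpha\in I_n\setminus\{p_1,\dots,p_k\}$. For a connected graph $G$ and integer $h\ge 0$, a set $S\subseteq V(G)$ is an $h$-cut if $G-S$ is disconnected and has minimum degree at least $h$; $\kappa_s^{(h)}(G)$ is the minimum cardinality of an $h$-cut of $G$. *)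

From mathcomp Require Import all_boot.
Set Implicit Arguments.
Unset Strict Implicit.
Unset Printing Implicit Defensive.

Definition del_rel (T : finType) (e : rel T) (S : {set T}) : rel T :=
  [rel x y | [&& x \notin S, y \notin S & e x y]].

Definition connected_graph (T : finType) (e : rel T) : Prop :=
  forall x y : T, connect e x y.

Definition disconnected_after (T : finType) (e : rel T) (S : {set T}) : Prop :=
  exists x y : T, [/\ x \notin S, y \notin S & ~~ connect (del_rel e S) x y].

Definition min_deg_after_ge (T : finType) (e : rel T) (S : {set T}) (h : nat) : Prop :=
  forall x : T, x \notin S -> h <= #|[set y | (y \notin S) && e x y]|.

Definition h_cut (T : finType) (e : rel T) (h : nat) (S : {set T}) : Prop :=
  disconnected_after e S /\ min_deg_after_ge e S h.

Definition kappa_s_h_eq (T : finType) (e : rel T) (h m : nat) : Prop :=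
  (exists S : {set T}, h_cut e h S /\ #|S| = m) /\
  (forall S : {set T}, h_cut e h S -> m <= #|S|).

(* k-permutations of I_n (I_n modelled as 'I_n = {0,...,n-1}) *)
Definition kperm (n k : nat) := {t : k.-tuple 'I_n | uniq t}.

Definition kseq (n k : nat) (p : kperm n k) : seq nat :=
  map (@nat_of_ord n) (val p).

Definition swap0 (s : seq nat) (i : nat) : seq nat :=
  set_nth 0 (set_nth 0 s 0 (nth 0 s i)) i (nth 0 s 0).

Definition star_adj (n k : nat) : rel (kperm n k) :=
  [rel p q |
    (* (a) swap p_1 with p_i, 2 <= i <= k *)
    [exists i : 'I_k, (0 < (i : nat)) && (kseq q == swap0 (kseq p) i)]
    || ((nth 0 (kseq q) 0 \notin kseq p) && (behead (kseq q) == behead (kseq p)))].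

From mathcomp Require Import all_boot.
Set Implicit Arguments.
Unset Strict Implicit.
Unset Printing Implicit Defensive.

(* In S_{n,2} a vertex is an ordered pair (a, b) of distinct symbols; it is
   adjacent to its swap (b, a) and to every (c, b) with c <> a, b.  Hence the
   vertices with second symbol b form a clique C_b of size n - 1, and two
   cliques C_a, C_c are joined by the single edge (c, a) -- (a, c).

   Upper bound: the cut S0 = {(b0, c)} (star_cut below) has n - 1 vertices;
   removing it isolates the clique C_b0 from, e.g., (b1, b2), and every
   remaining vertex keeps n - 2 neighbours (its clique-mates outside S0 and, if still present, its swap).
   So S0 is an h-cut for every h <= n - 2.

   Lower bound: if |S| < n - 1 then G - S is connected.  Each C_b \ S is a
   nonempty clique.  To join C_b to C_d (b <> d) use either the direct link
   b -- d or a detour b -- r -- d through a third clique.  These n - 1 routes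
   are vertex-disjoint: a "pivot" map sends every vertex of route r to r, so
   if all routes met S then S would cover n - 1 pivots, contradicting
   |S| < n - 1. *)

Lemma connect_forward_closed (T : finType) (e : rel T) (C : pred T) :
  (forall u w, C u -> e u w -> C w) -> forall x y, C x -> connect e x y -> C y.
Proof.
move=> closedC x y Cx /connectP[p]; elim: p x Cx => [|z p IHp] x Cx /=.
  by move=> _ ->.
by case/andP=> exz pz ly; exact: IHp (closedC _ _ Cx exz) pz ly.
Qed.

Section Star2.

Variable n : nat.
Notation V := (kperm n 2).
Notation adj := (@star_adj n 2).

Definition sym1 (v : V) : 'I_n := tnth (val v) ord0.
Definition sym2 (v : V) : 'I_n := tnth (val v) ord_max.

Lemma kseq_sym (v : V) : kseq v = [:: (sym1 v : nat); (sym2 v : nat)].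
Proof. by case: v => [[[|a [|b [|c s]]] //= Hs] Hu]. Qed.

Lemma sym1_neq_sym2 (v : V) : sym1 v != sym2 v.
Proof.
case: v => [[[|a [|b [|c s]]] //= Hs] Hu]; rewrite /sym1 /sym2 /tnth /=.
by move: Hu; rewrite /= inE andbT.
Qed.

Lemma kperm2_eq (u w : V) : sym1 u = sym1 w -> sym2 u = sym2 w -> u = w.
Proof.
case: u => [[[|a [|b [|c s]]] //= Hs] Hu].
case: w => [[[|a' [|b' [|c' s']]] //= Hs'] Hu'].
rewrite /sym1 /sym2 /tnth /= => e1 e2.
by apply/val_inj/val_inj; rewrite /= e1 e2.
Qed.

(* The vertex (a, b), or the junk value d when a = b. *)
Definition mkv (d : V) (a b : 'I_n) : V := odflt d (insub [tuple a; b]).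

Lemma mkv_sym (d : V) (a b : 'I_n) :
  a != b -> sym1 (mkv d a b) = a /\ sym2 (mkv d a b) = b.
Proof. by move=> ab; rewrite /mkv insubT /= ?inE ?andbT. Qed.

Lemma star_adjE (u w : V) : adj u w =
  ((sym1 w == sym2 u) && (sym2 w == sym1 u)) ||
  [&& sym1 w != sym1 u, sym1 w != sym2 u & sym2 w == sym2 u].
Proof.
rewrite /star_adj /= !kseq_sym /= !inE negb_or -andbA eqseq_cons andbT.
congr (_ || _); apply/existsP/idP.
  case=> -[[|[|i]] Hi] //=; rewrite /swap0 /=.
  by case/andP=> H1 /andP[H2 _]; rewrite -!val_eqE /= H1 H2.
by case/andP=> /eqP e1 /eqP e2; exists ord_max; rewrite /swap0 /= e1 e2.
Qed.

Lemma adj_clique (u w : V) : sym2 u = sym2 w -> sym1 u != sym1 w -> adj u w.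
Proof.
move=> e ne; rewrite star_adjE; apply/orP; right.
by rewrite eq_sym ne -e eqxx andbT e sym1_neq_sym2.
Qed.

Lemma adj_swap (u w : V) : sym1 w = sym2 u -> sym2 w = sym1 u -> adj u w.
Proof. by move=> e1 e2; rewrite star_adjE e1 e2 !eqxx. Qed.

Lemma card_compl2 (a b : 'I_n) : a != b -> #|~: [set a; b]| = n - 2.
Proof. by move=> ab; rewrite cardsCs setCK cards2 ab card_ord. Qed.

Section UpperBound.

Variable b0 : 'I_n.
Definition star_cut : {set V} := [set v : V | sym1 v == b0].

Lemma card_star_cut (v0 : V) : #|star_cut| = n - 1.
Proof.
have inj : {in star_cut &, injective sym2}.
  by move=> u w; rewrite !inE => /eqP u1 /eqP w1; apply: kperm2_eq; rewrite u1 w1.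
have img : sym2 @: star_cut = [set~ b0].
  apply/setP => c; rewrite !inE; apply/imsetP/idP.
    by case=> v; rewrite inE => /eqP <- ->; rewrite eq_sym sym1_neq_sym2.
  rewrite eq_sym => b0c; have [s1 s2] := mkv_sym v0 b0c.
  by exists (mkv v0 b0 c); rewrite ?inE ?s1.
by rewrite -(card_in_imset inj) img cardsC1 card_ord subn1.
Qed.

(* The clique C_b0, containing (b1, b0), is a component of G - star_cut that
   misses (b1, b2). *)
Lemma star_cut_disconnects (v0 : V) (b1 b2 : 'I_n) :
  b0 != b1 -> b0 != b2 -> b1 != b2 -> disconnected_after adj star_cut.
Proof.
move=> b01 b02 b12; have b10 : b1 != b0 by rewrite eq_sym.
have [x1 x2] := mkv_sym v0 b10; have [y1 y2] := mkv_sym v0 b12.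
exists (mkv v0 b1 b0), (mkv v0 b1 b2); split; rewrite ?inE ?x1 ?y1 ?b10 //.
have clique_closed : forall u w, sym2 u == b0 -> del_rel adj star_cut u w ->
    sym2 w == b0.
  move=> u w /eqP u2; rewrite /del_rel /= !inE star_adjE => /and3P[_ wS].
  case/orP => [/andP[/eqP w1 _] | /and3P[_ _ /eqP ->]].
    by move: wS; rewrite w1 u2 eqxx.
  by rewrite u2.
apply/negP => /(connect_forward_closed clique_closed); rewrite x2 y2 eqxx.
by move/(_ isT); rewrite eq_sym (negbTE b02).
Qed.

(* Every vertex has at least n - 2 neighbours outside star_cut: its clique-mates
   (c, sym2 x) with c <> b0, and its swap standing in for (b0, sym2 x). *)
Lemma star_cut_min_deg (x : V) :
  n - 2 <= #|[set y | (y \notin star_cut) && adj x y]|.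
Proof.
pose nb c := if c == b0 then mkv x (sym2 x) (sym1 x) else mkv x c (sym2 x).
have x21 : sym2 x != sym1 x by rewrite eq_sym sym1_neq_sym2.
have [s1 s2] := mkv_sym x x21.
have nbE c : c \in ~: [set sym1 x; sym2 x] -> c != b0 ->
    sym1 (nb c) = c /\ sym2 (nb c) = sym2 x.
  by rewrite !inE negb_or => /andP[_ c2] /negbTE cb0; rewrite /nb cb0; apply: mkv_sym.
have nb_inj : {in ~: [set sym1 x; sym2 x] &, injective nb}.
  move=> c c' cD c'D.
  case: (eqVneq c b0) => [-> | cb0]; case: (eqVneq c' b0) => [-> //| c'b0].
  - have [_ t2] := nbE _ c'D c'b0; rewrite {1}/nb eqxx => /(congr1 sym2).
    by rewrite s2 t2 => e; move: x21; rewrite e eqxx.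
  - have [_ t2] := nbE _ cD cb0; rewrite {2}/nb eqxx => /(congr1 sym2).
    by rewrite s2 t2 => e; move: x21; rewrite e eqxx.
  have [t1 _] := nbE _ cD cb0; have [t1' _] := nbE _ c'D c'b0.
  by move=> /(congr1 sym1); rewrite t1 t1'.
rewrite -(card_compl2 (sym1_neq_sym2 x)) -(card_in_imset nb_inj).
apply/subset_leq_card/subsetP => _ /imsetP[c cD ->]; rewrite inE.
case: (eqVneq c b0) => [cb0 | cb0].
  move: cD; rewrite /nb cb0 eqxx !inE negb_or => /andP[_ b0x2].
  by rewrite s1 eq_sym b0x2; apply: adj_swap.
have [t1 t2] := nbE _ cD cb0; rewrite inE t1 cb0 /=.
apply: adj_clique; rewrite ?t1 ?t2 //.
by move: cD; rewrite !inE negb_or eq_sym => /andP[].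
Qed.

End UpperBound.

Section LowerBound.

Variables (S : {set V}) (v0 : V).
Notation E := (del_rel adj S).

Lemma connect_clique (u w : V) : u \notin S -> w \notin S -> sym2 u = sym2 w ->
  connect E u w.
Proof.
move=> uS wS e; case: (eqVneq (sym1 u) (sym1 w)) => e1.
  by rewrite (kperm2_eq e1 e) connect0.
by apply: connect1; rewrite /del_rel /= uS wS adj_clique.
Qed.

(* The edge (c, a) -- (a, c) joining C_a and C_c survives in G - S. *)
Definition link (a c : 'I_n) : bool := (mkv v0 c a \notin S) && (mkv v0 a c \notin S).

Lemma connect_link (a c : 'I_n) (u w : V) : a != c -> link a c ->
  u \notin S -> w \notin S -> sym2 u = a -> sym2 w = c -> connect E u w.
Proof.
move=> ac /andP[ca_S ac_S] uS wS u2 w2.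
have ca : c != a by rewrite eq_sym.
have [p1 p2] := mkv_sym v0 ca; have [q1 q2] := mkv_sym v0 ac.
apply: (connect_trans (y := mkv v0 c a)); first by apply: connect_clique; rewrite ?p2.
apply: (connect_trans (y := mkv v0 a c)); last by apply: connect_clique; rewrite ?q2.
by apply: connect1; rewrite /del_rel /= ca_S ac_S adj_swap ?p1 ?p2 ?q1 ?q2.
Qed.

(* Joining C_b to C_t (b <> t), route r <> b is the direct link b -- t when
   r = t and the detour b -- r -- t otherwise.  The pivot of a vertex is the
   only route it can block, so distinct routes are blocked by distinct
   vertices of S. *)
Variables (b t : 'I_n).
Definition pivot (v : V) : 'I_n :=
  if sym2 v == b then sym1 v else if sym1 v == b then sym2 v
  else if sym1 v == t then sym2 v else sym1 v.

Lemma pivot_link_first (r : 'I_n) : r != b -> ~~ link b r -> r \in pivot @: S.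
Proof.
move=> rb; have br : b != r by rewrite eq_sym.
have [p1 p2] := mkv_sym v0 rb; have [q1 q2] := mkv_sym v0 br.
rewrite negb_and !negbK => /orP[] vS; apply/imsetP;
  [exists (mkv v0 r b) | exists (mkv v0 b r)] => //.
  by rewrite /pivot p1 p2 eqxx.
by rewrite /pivot q1 q2 (negbTE rb) eqxx.
Qed.

Lemma pivot_link_second (r : 'I_n) : b != t -> r != b -> r != t ->
  ~~ link r t -> r \in pivot @: S.
Proof.
move=> bt rb rt; have tr : t != r by rewrite eq_sym.
have tb : t != b by rewrite eq_sym.
have [p1 p2] := mkv_sym v0 tr; have [q1 q2] := mkv_sym v0 rt.
rewrite negb_and !negbK => /orP[] vS; apply/imsetP;
  [exists (mkv v0 t r) | exists (mkv v0 r t)] => //.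
  by rewrite /pivot p1 p2 (negbTE rb) (negbTE tb) eqxx.
by rewrite /pivot q1 q2 (negbTE tb) (negbTE rb) (negbTE rt).
Qed.

End LowerBound.

Lemma star2_connected_after (S : {set V}) (x y : V) : #|S| < n - 1 ->
  x \notin S -> y \notin S -> connect (del_rel adj S) x y.
Proof.
move=> small xS yS; set b := sym2 x; set t := sym2 y.
have [bt | bt] := eqVneq b t; first exact: connect_clique.
have tb : t != b by rewrite eq_sym.
(* x is only used as the junk value of mkv, which never matters here. *)
pose route r := if r == t then link S x b t else link S x b r && link S x r t.
have [r /andP[rb] | blocked] := pickP [pred r | (r != b) && route r].
  rewrite /route; case: (eqVneq r t) rb => [-> _ l | rt rb].
    exact: connect_link bt l xS yS _ _.
  case/andP=> link_br link_rt; have br : b != r by rewrite eq_sym.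
  have [_ mid2] := mkv_sym x br.
  have mid_S : mkv x b r \notin S by case/andP: link_br.
  apply: (connect_trans (y := mkv x b r)); first exact: connect_link link_br _ _ _ _.
  exact: connect_link link_rt _ _ _ _.
have covered : [set~ b] \subset pivot b t @: S.
  apply/subsetP => r; rewrite !inE => rb; move: (blocked r); rewrite /= rb /route /=.
  case: (eqVneq r t) rb => [-> _ | rt rb] /negbT; first exact: pivot_link_first tb.
  rewrite negb_and => /orP[unlinked | unlinked].
    exact: pivot_link_first rb unlinked.
  exact: pivot_link_second bt rb rt unlinked.
move: (leq_trans (subset_leq_card covered) (leq_imset_card _ _)).
by rewrite cardsC1 card_ord -subn1 leqNgt small.
Qed.

End Star2.

Theorem corollary3p2 (n h : nat) :
  3 <= n -> h <= n - 2 ->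
  kappa_s_h_eq (@star_adj n 2) h (n - 1).
Proof.
move=> n3 hn.
pose b0 : 'I_n := Ordinal (leq_trans (isT : 0 < 3) n3).
pose b1 : 'I_n := Ordinal (leq_trans (isT : 1 < 3) n3).
pose b2 : 'I_n := Ordinal (leq_trans (isT : 2 < 3) n3).
pose x0 : kperm n 2 := exist _ [tuple b1; b0] (isT : uniq [:: b1; b0]).
split.
- exists (star_cut b0); split; last exact: card_star_cut.
  split; first exact: (@star_cut_disconnects n b0 x0 b1 b2).
  by move=> x _; apply: leq_trans hn (star_cut_min_deg b0 x).
- move=> S [[x [y [xS yS disc]]] _]; rewrite leqNgt.
  by apply: contra disc => small; apply: star2_connected_after.
Qed.
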